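(* Each of the following cardinals is less than or equal to the next: (1) $\aleph_1$; (2) the smallest cardinality of a weakly $\mathbb{Z}^{(\omega)}$-binding group; (3) the smallest cardinality of a binding group; (4) the smallest cardinality of a self-binding group; (5) the cardinality $\mathfrak{c}=2^{\aleph_0}$ of the continuum.
   Context: All groups are abelian. $\mathbb{Z}^{\omega}$ is the product of countably many copies of $\mathbb{Z}$; $\mathbb{Z}^{(\omega)}\subseteq\mathbb{Z}^\omega$ is the subgroup of finitely supported sequences. A group is torsionless if it embeds in $\mathbb{Z}^I$ for some set $I$. Rank means torsion-free rank. A group $G$ binds a subgroup $H$ if every homomorphism from $G$ to a free abelian group maps $H$ into a group of finite rank. A torsionless group is binding if it binds some subgroup of infinite rank; it is self-binding if it has infinite rank and binds itself. A group $G$ with $\mathbb{Z}^{(\omega)}\subseteq G\subseteq\mathbb{Z}^\omega$ is weakly $\mathbb{Z}^{(\omega)}$-binding if every homomorphism $G\to\mathbb{Z}^{(\omega)}$ that extends to an endomorphism of $\mathbb{Z}^\omega$ maps $\mathbb{Z}^{(\omega)}$ to a group of finite rank. *)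

From Stdlib Require List.
From HB Require Import structures.
From mathcomp Require Import all_boot all_order all_algebra.
From mathcomp Require Import functions.
Set Implicit Arguments. Unset Strict Implicit. Unset Printing Implicit Defensive.
Import GRing.Theory.
Local Open Scope ring_scope.

(* All groups are abelian: modelled as MathComp zmodTypes.  For any type I,
   the function type I -> int carries the pointwise zmodType structure
   (mathcomp-classical functions.v); this is Z^I.  Z^omega = nat -> int. *)

Definition additive_map (G H : zmodType) (f : G -> H) : Prop :=
  forall x y : G, f (x - y) = f x - f y.

Definition subgroup (G : zmodType) (S : G -> Prop) : Prop :=
  S 0 /\ (forall x y, S x -> S y -> S (x - y)).

Definition Z_independent (G : zmodType) (s : seq G) : Prop :=
  forall c : seq int, size c = size s ->
    \sum_(k < size s) (nth 0 s k) *~ (nth 0 c k) = 0 ->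
    forall k, nth 0 c k = 0.

Definition finite_rank (G : zmodType) (S : G -> Prop) : Prop :=
  exists n : nat, forall s : seq G,
    (forall k, (k < size s)%N -> S (nth 0 s k)) -> Z_independent s ->
    (size s <= n)%N.

Definition infinite_rank (G : zmodType) (S : G -> Prop) : Prop :=
  ~ finite_rank S.

Definition img (A B : Type) (f : A -> B) (S : A -> Prop) : B -> Prop :=
  fun y => exists2 x, S x & f x = y.

(* finitely supported element of Z^I, i.e. element of Z^(I) *)
Definition fin_supp (I : Type) (v : I -> int) : Prop :=
  exists l : seq I, forall i, v i <> 0 -> List.In i l.

Definition torsionless (G : zmodType) : Prop :=
  exists (I : Type) (f : G -> (I -> int)), additive_map f /\ injective f.

(* G binds H: every homomorphism from G to a free abelian group (= Z^(I),
   up to isomorphism, for a set I) maps H into a group of finite rank. *)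
Definition binds (G : zmodType) (H : G -> Prop) : Prop :=
  forall (I : Type) (phi : G -> (I -> int)),
    additive_map phi -> (forall x, fin_supp (phi x)) ->
    finite_rank (img phi H).

Definition binding (G : zmodType) : Prop :=
  torsionless G /\
  exists H : G -> Prop, subgroup H /\ infinite_rank H /\ binds H.

Definition self_binding (G : zmodType) : Prop :=
  torsionless G /\ infinite_rank (fun _ : G => True) /\ binds (fun _ : G => True).

Definition Zfin : (nat -> int) -> Prop := fun v => fin_supp v.

(* G with Z^(omega) <= G <= Z^omega is weakly Z^(omega)-binding: every
   homomorphism G -> Z^(omega) extending to an endomorphism psi of Z^omega
   maps Z^(omega) to a group of finite rank. *)
Definition weakly_Zfin_binding (G : (nat -> int) -> Prop) : Prop :=
  subgroup G /\ (forall v, Zfin v -> G v) /\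
  forall psi : (nat -> int) -> (nat -> int),
    additive_map psi -> (forall v, G v -> Zfin (psi v)) ->
    finite_rank (img psi Zfin).

(* Specker: a homomorphism phi from Z^omega to a free abelian group kills all
   but finitely many unit vectors e_n (test it on x = sum_n K_n e_n with fast
   growing K_n), and it kills every sequence vanishing below such an N (split it
   into a part whose n-th entry is divisible by 2^n and one divisible by 3^n);
   so phi factors through Z^N.  Hence Z^omega is self-binding, of size
   continuum, and self-binding groups are binding.
   A countable G is never weakly Z^(omega)-binding: on the n-th block of n+1
   coordinates take a nonzero integer vector orthogonal to the first n elements
   of G; pairing each block with its vector maps G into Z^(omega) but Z^(omega)
   onto a group of infinite rank.
   If G embeds in Z^I and binds K of infinite rank, choose k_n in K and
   coordinates i_n making (f k_m (i_n)) triangular, and recombine coordinates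
   into theta : G -> Z^omega with theta k_n = D_n e_n, D_n <> 0.  Then
   theta G + Z^(omega) is weakly binding, because every element of Z^(omega)
   has a nonzero multiple in theta K, and it injects into G. *)

From HB Require Import structures.
From mathcomp Require Import all_boot all_algebra.
From mathcomp Require Import boolp classical_sets functions.
From mathcomp Require Import zify ring.
Set Implicit Arguments. Unset Strict Implicit. Unset Printing Implicit Defensive.
Import GRing.Theory Num.Theory.

Local Open Scope ring_scope.

Section AdditiveMap.
Variables (G H : zmodType) (f : G -> H).
Hypothesis f_add : additive_map f.

Let fA : {additive G -> H} := HB.pack f (GRing.isZmodMorphism.Build G H f f_add).

Lemma additive_map0 : f 0 = 0. Proof. exact: (raddf0 fA). Qed.
Lemma additive_mapD x y : f (x + y) = f x + f y. Proof. exact: (raddfD fA). Qed.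
Lemma additive_mapMz x c : f (x *~ c) = f x *~ c. Proof. exact: (raddfMz fA). Qed.
Lemma additive_map_sum (J : Type) (r : seq J) (P : pred J) (F : J -> G) :
  f (\sum_(j <- r | P j) F j) = \sum_(j <- r | P j) f (F j).
Proof. exact: (raddf_sum fA). Qed.

End AdditiveMap.

Lemma additive_map_comp (G H L : zmodType) (f : G -> H) (g : H -> L) :
  additive_map f -> additive_map g -> additive_map (g \o f).
Proof. by move=> hf hg x y /=; rewrite hf hg. Qed.

Lemma fct_intmulE (T : Type) (x : T -> int) c t : (x *~ c) t = x t * c.
Proof. by rewrite (additive_mapMz (fun x y : T -> int => erefl (x t - y t))) mulrzz. Qed.

Section Subgroup.
Variables (G : zmodType) (S : G -> Prop).
Hypothesis S_sub : subgroup S.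

Lemma subgroup0 : S 0. Proof. by case: S_sub. Qed.
Lemma subgroupB x y : S x -> S y -> S (x - y). Proof. by case: S_sub => _; apply. Qed.
Lemma subgroupN x : S x -> S (- x).
Proof. by rewrite -sub0r; apply: subgroupB subgroup0. Qed.
Lemma subgroupD x y : S x -> S y -> S (x + y).
Proof. by move=> Sx /subgroupN; rewrite -{2}[y]opprK; apply: subgroupB. Qed.
Lemma subgroupMz x c : S x -> S (x *~ c).
Proof.
move=> Sx; have Sn n : S (x *+ n).
  by elim: n => [|n IHn]; [rewrite mulr0n; apply: subgroup0 | rewrite mulrS; apply: subgroupD].
by case: c => n; rewrite ?NegzE ?mulrNz; [apply: Sn | apply/subgroupN/Sn].
Qed.
Lemma subgroup_sum (J : Type) (r : seq J) (P : pred J) (F : J -> G) :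
  (forall j, P j -> S (F j)) -> S (\sum_(j <- r | P j) F j).
Proof.
move=> SF; elim/big_rec: _ => [|j x Pj Sx]; first exact: subgroup0.
exact: subgroupD (SF j Pj) Sx.
Qed.

End Subgroup.

Lemma subgroup_img (G H : zmodType) (f : G -> H) (S : G -> Prop) :
  additive_map f -> subgroup S -> subgroup (img f S).
Proof.
move=> hf hS; split; first by exists 0; [apply: subgroup0 | rewrite additive_map0].
by move=> _ _ [x Sx <-] [y Sy <-]; exists (x - y); [apply: subgroupB | rewrite hf].
Qed.

Lemma subgroup_purify (G : zmodType) (S : G -> Prop) : subgroup S ->
  subgroup (fun x => exists2 D : int, D != 0 & S (x *~ D)).
Proof.
move=> hS; split; first by exists 1; rewrite // mul0rz; apply: subgroup0.
move=> x y [D D0 Sx] [E E0 Sy]; exists (D * E); first by rewrite mulf_neq0.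
rewrite mulrzBl {2}[D * E]mulrC !mulrzA.
by apply: (subgroupB hS); apply: (subgroupMz hS).
Qed.

Lemma List_InP (T : eqType) (x : T) (s : seq T) : List.In x s <-> x \in s.
Proof.
elim: s => [//|y s IHs] /=; rewrite in_cons.
by split=> [[->|/IHs->]|/orP[/eqP->|/IHs]]; rewrite ?eqxx ?orbT; auto.
Qed.

Lemma homogeneous_system_nontrivial (R : idomainType) (rows : seq (nat -> R)) (m : nat) :
  (size rows < m)%N -> exists c : nat -> R, (exists2 i, (i < m)%N & c i != 0) /\
    forall r, r \in rows -> \sum_(i < m) r i * c i = 0.
Proof.
elim: m rows => [//|m IHm] rows rows_lt.
have [[p p_row pm_neq0]|no_pivot] := pselect (exists2 p, p \in rows & p m != 0); last first.
  exists (fun i => (i == m)%:R); split; first by exists m; rewrite ?eqxx ?oner_eq0.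
  move=> r r_row; rewrite big_ord_recr /= eqxx mulr1 big1 ?add0r => [|i _].
    by apply/eqP; apply: contra_notT no_pivot => rm; exists r.
  by rewrite ltn_eqF ?mulr0.
pose rows' := [seq (fun i => p m * r i - r m * p i) | r <- rem p rows].
have rows'_lt : (size rows' < m)%N by rewrite size_map size_rem //; case: (rows) rows_lt p_row.
have [c [[i0 i0_lt ci0] c_sol]] := IHm rows' rows'_lt.
exists (fun i => if (i < m)%N then p m * c i else - \sum_(j < m) p j * c j).
split; first by exists i0; [apply: ltnW | rewrite i0_lt mulf_neq0].
have elim_m (r : nat -> R) : \sum_(i < m.+1) r i * (if (i < m)%N then p m * c i
                                         else - \sum_(j < m) p j * c j)
    = \sum_(i < m) (p m * r i - r m * p i) * c i.
  rewrite big_ord_recr /= ltnn mulrN mulr_sumr -sumrB.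
  by apply: eq_bigr => i _; rewrite ltn_ord; ring.
move=> r r_row; rewrite elim_m.
have [->|r_neq_p] := eqVneq r p; first by apply: big1 => i _; ring.
apply: (c_sol (fun i => p m * r i - r m * p i)); apply: map_f.
by move: r_row; rewrite (perm_mem (perm_to_rem p_row)) in_cons (negbTE r_neq_p).
Qed.

Section UpperTriangular.
Variables (R : idomainType) (w : nat -> nat -> R).
Hypotheses (w_upper : forall m j, (j < m)%N -> w m j = 0) (w_diag : forall m, w m m != 0).

Lemma upper_triangular_kernel0 (s : nat -> R) n :
  (forall m, (m <= n)%N -> \sum_(j < n.+1) s j * w m j = 0) ->
  forall j, (j <= n)%N -> s j = 0.
Proof.
move=> s_sol.
have step j : (j <= n)%N -> (forall k, (j < k <= n)%N -> s k = 0) -> s j = 0.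
  move=> jn s_above; have := s_sol j jn.
  rewrite (bigD1 (Ordinal (jn : (j < n.+1)%N))) //= big1 ?addr0 => [|k k_neq_j].
    by move/eqP; rewrite mulf_eq0 (negbTE (w_diag j)) orbF => /eqP.
  have [k_lt_j|j_lt_k|k_eq_j] := ltngtP k j; first by rewrite w_upper ?mulr0.
    by rewrite s_above ?mul0r // j_lt_k -ltnS ltn_ord.
  by move: k_neq_j; rewrite -val_eqE /= k_eq_j eqxx.
suff s_zero d j : (n - d <= j <= n)%N -> s j = 0.
  by move=> j jn; apply: (s_zero n); rewrite subnn jn.
elim: d j => [|d IHd] j /andP[j_lo j_hi]; apply: step => // k /andP[jk kn].
  by move: j_lo; rewrite subn0; lia.
by apply: IHd; rewrite kn andbT; lia.
Qed.

Lemma upper_triangular_dual_family :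
  exists (r : nat -> nat -> R) (D : nat -> R), (forall n, D n != 0) /\
    forall m n, \sum_(j < n.+1) r n j * w m j = if m == n then D n else 0.
Proof.
have kernel n : exists c : nat -> R, (exists2 j, (j < n.+1)%N & c j != 0) /\
    forall m, (m < n)%N -> \sum_(j < n.+1) w m j * c j = 0.
  have [|c [c_nz c_sol]] := @homogeneous_system_nontrivial R [seq w m | m <- iota 0 n] n.+1.
    by rewrite size_map size_iota.
  by exists c; split => // m mn; apply: c_sol; rewrite map_f // mem_iota.
have [r r_spec] := choice kernel.
exists r, (fun n => \sum_(j < n.+1) r n j * w n j); split => [n|m n].
  have [[j jn rj_neq0] r_sol] := r_spec n.
  apply: contra rj_neq0 => /eqP D_eq0; apply/eqP.
  apply: (upper_triangular_kernel0 _ (n := n)) => // m.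
  rewrite leq_eqVlt => /orP[/eqP->//|m_lt_n].
  by rewrite -[RHS](r_sol m m_lt_n); apply: eq_bigr => k _; rewrite mulrC.
have [m_lt_n|n_lt_m|->//] := ltngtP m n.
- rewrite -[RHS]((r_spec n).2 m m_lt_n).
  by apply: eq_bigr => k _; rewrite mulrC.
- apply: big1 => j _.
  by rewrite w_upper ?mulr0 // (leq_trans (ltn_ord j)).
Qed.

End UpperTriangular.

Section Independence.
Variable G : zmodType.

Lemma Z_independent_scale (s : seq G) (D : nat -> int) :
  (forall l, (l < size s)%N -> D l != 0) -> Z_independent s ->
  Z_independent (mkseq (fun l => nth 0 s l *~ D l) (size s)).
Proof.
move=> D_nz s_ind c; rewrite size_mkseq => c_size c_sum k.
have [k_lt|k_ge] := ltnP k (size s); last by rewrite nth_default // c_size.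
have := s_ind (mkseq (fun l => D l * nth 0 c l) (size s)) (size_mkseq _ _) _ k.
rewrite nth_mkseq // => /(_ _)/eqP; rewrite mulf_eq0 (negbTE (D_nz k k_lt)) => /(_ _)/eqP.
apply; rewrite -[RHS]c_sum; apply: eq_bigr => l _.
by rewrite !nth_mkseq // mulrzA.
Qed.

Lemma Z_independent_span_size (a : nat -> G) (N : nat) (s : seq G) :
  Z_independent s ->
  (forall l, (l < size s)%N -> exists c : nat -> int, nth 0 s l = \sum_(n < N) a n *~ c n) ->
  (size s <= N)%N.
Proof.
move=> s_ind s_span; rewrite leqNgt; apply/negP => N_lt.
have /choice[C C_spec] : forall l, exists c : nat -> int, (l < size s)%N ->
    nth 0 s l = \sum_(n < N) a n *~ c n.
  move=> l; have [l_lt|l_ge] := ltnP l (size s); first by have [c] := s_span l l_lt; exists c.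
  by exists (fun=> 0).
have [|d [[l l_lt dl_neq0] d_sol]] :=
  @homogeneous_system_nontrivial _ [seq (fun l => C l n) | n <- iota 0 N] (size s).
  by rewrite size_map size_iota.
apply/negP: dl_neq0; rewrite negbK; apply/eqP.
have := s_ind (mkseq d (size s)) (size_mkseq _ _) _ l; rewrite nth_mkseq //; apply.
transitivity (\sum_(k < size s) \sum_(n < N) a n *~ (C k n * d k)).
  apply: eq_bigr => k _; rewrite nth_mkseq // C_spec // mulrz_suml.
  by apply: eq_bigr => n _; rewrite mulrzA.
rewrite exchange_big /=; apply: big1 => n _.
by rewrite -mulrz_sumr (d_sol (fun l => C l n)) ?mulr0z // map_f // mem_iota add0n ltn_ord.
Qed.

Lemma finite_rank_multiples (S T : G -> Prop) :
  (forall x, S x -> exists2 D : int, D != 0 & T (x *~ D)) ->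
  finite_rank T -> finite_rank S.
Proof.
move=> ST [R T_rank]; exists R => s s_S s_ind.
have /choice[D D_spec] : forall l, exists D : int, (l < size s)%N ->
    D != 0 /\ T (nth 0 s l *~ D).
  move=> l; have [l_lt|l_ge] := ltnP l (size s); last by exists 0.
  by have [D] := ST _ (s_S l l_lt); exists D.
rewrite -(size_mkseq (fun l => nth 0 s l *~ D l) (size s)); apply: T_rank => [l|].
  by rewrite size_mkseq => l_lt; rewrite nth_mkseq //; case: (D_spec l l_lt).
by apply: Z_independent_scale s_ind => l /D_spec[].
Qed.

End Independence.

Definition unitv (n : nat) : nat -> int := fun k => (k == n)%:Z.

Lemma sum_unitvE (c : nat -> int) m k :
  (\sum_(n < m) unitv n *~ c n) k = if (k < m)%N then c k else 0.
Proof.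
rewrite fct_sumE; elim: m => [|m IHm]; first by rewrite big_ord0.
rewrite big_ord_recr /= IHm fct_intmulE /unitv ltnS.
by case: (ltngtP k m) => [||->]; rewrite ?mul0r ?addr0 // add0r mul1r.
Qed.

Lemma unitv_split (v : nat -> int) m :
  v = \sum_(n < m) unitv n *~ v n + (fun n => if (n < m)%N then 0 else v n).
Proof. by apply/funext => k; rewrite addrfctE /= sum_unitvE; case: ifP; rewrite ?addr0 ?add0r. Qed.

Lemma ZfinP (z : nat -> int) : Zfin z <-> exists N, forall n, (N <= n)%N -> z n = 0.
Proof.
split=> [[l z_supp]|[N z_tail]].
  exists (\max_(i <- l) i).+1 => n; apply: contraTeq => zn_neq0.
  by rewrite -ltnNge ltnS leq_bigmax_seq //; apply/List_InP/z_supp/eqP.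
exists (iota 0 N) => n zn_neq0; apply/List_InP; rewrite mem_iota add0n /=.
by rewrite ltnNge; apply: contra_notN zn_neq0 => /z_tail.
Qed.

Lemma Zfin_subgroup : subgroup Zfin.
Proof.
split=> [|x y /ZfinP[M x_tail] /ZfinP[N y_tail]]; apply/ZfinP; first by exists 0%N.
exists (maxn M N) => n; rewrite geq_max => /andP[Mn Nn].
by rewrite opprfctE addrfctE /= x_tail ?y_tail ?subrr.
Qed.

Lemma Zfin_sub_subgroup (S : (nat -> int) -> Prop) :
  subgroup S -> (forall n, S (unitv n)) -> forall z, Zfin z -> S z.
Proof.
move=> S_sub S_unitv z /ZfinP[N z_tail]; rewrite (unitv_split z N).
have -> : (fun n => if (n < N)%N then 0 else z n) = 0.
  by apply/funext => n; case: ltnP => // /z_tail.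
by rewrite addr0; apply: subgroup_sum => // n _; apply: subgroupMz.
Qed.

Lemma infinite_rank_unitv_multiples (S : (nat -> int) -> Prop) (q : nat -> int) :
  (forall n, q n != 0) -> (forall n, S (unitv n *~ q n)) -> infinite_rank S.
Proof.
move=> q_nz S_q [R S_rank].
suff: (R.+1 <= R)%N by rewrite ltnn.
rewrite -{1}(size_mkseq (fun n => unitv n *~ q n) R.+1).
apply: S_rank => [k|c]; rewrite size_mkseq; first by move=> k_lt; rewrite nth_mkseq.
move=> c_size c_sum k.
have [k_lt|k_ge] := ltnP k R.+1; last by rewrite nth_default // c_size.
have /eqP := congr1 (fun x => x k) c_sum.
under eq_bigr => n _ do rewrite nth_mkseq // -mulrzA.
by rewrite (sum_unitvE (fun n => q n * c`_n)) k_lt mulf_eq0 (negbTE (q_nz k)) => /eqP.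
Qed.

Lemma fin_supp_bounded (T : Type) (v : T -> int) :
  fin_supp v -> exists M : nat, forall i, `|v i| <= M%:Z.
Proof.
move=> [l v_supp]; exists (\sum_(j <- l) `|v j|)%N => i.
have [->|/eqP vi_neq0] := eqVneq (v i) 0; first by rewrite normr0.
rewrite -abszE lez_nat; elim: l {v_supp}(v_supp i vi_neq0) => [//|j l IHl] /=.
by rewrite big_cons => -[->|/IHl]; [apply: leq_addr | move/leq_trans; apply; apply: leq_addl].
Qed.

Lemma eq0_of_dvdz_exp (b x : int) (N : nat) :
  1 < b -> (forall m, (N <= m)%N -> (b ^+ m %| x)%Z) -> x = 0.
Proof.
move=> b_gt1 b_dvd; apply/eqP; apply: contraT => x_neq0.
pose m := maxn N `|x|%N.
have := dvdn_leq _ (b_dvd m (leq_maxl _ _)); rewrite absz_gt0 abszX => /(_ x_neq0).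
rewrite leqNgt (leq_ltn_trans (leq_maxr N _)) // ltn_expl //; lia.
Qed.

Section Specker.
Variables (I : Type) (phi : (nat -> int) -> I -> int).
Hypotheses (phi_add : additive_map phi) (phi_fin : forall x, fin_supp (phi x)).

Section GrowthSequence.
Variable M : nat -> nat.
Hypothesis M_bound : forall n i, `|phi (unitv n) i| <= (M n)%:Z.

(* The growth K_(j+1) = 2 (M_j + 1) K_j keeps the image of the first j terms
   of x = sum_n K_n e_n below K_j / 2, while the rest of x is K_j y_j. *)
Let c n := (M n).+1.*2.
Let K j := \prod_(0 <= n < j) c n.
Let y j : nat -> int := fun n => if (n < j)%N then 0 else (\prod_(j <= k < n) c k)%:Z.

Let K_rec j : K j.+1 = (K j * c j)%N.
Proof. by rewrite /K big_nat_recr. Qed.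

Let K_gt j : (j < K j)%N.
Proof.
elim: j => [|j IHj]; first by rewrite /K big_nil.
by rewrite K_rec /c -muln2; nia.
Qed.

Let y_rec j : y j = unitv j + y j.+1 *~ (c j)%:Z.
Proof.
apply/funext => n; rewrite addrfctE fct_intmulE /y /unitv.
have [n_lt_j|j_lt_n|->] := ltngtP n j.
- by rewrite ltnS ltnW // mul0r addr0.
- by rewrite ltnNge j_lt_n /= big_ltn // PoszM mulrC add0r.
- by rewrite ltnSn big_geq // mul0r addr0.
Qed.

Let test_seq_split j : (fun n => (K n)%:Z) = \sum_(n < j) unitv n *~ (K n)%:Z + y j *~ (K j)%:Z.
Proof.
apply/funext => n; rewrite addrfctE (sum_unitvE (fun n => (K n)%:Z)) fct_intmulE /y.
case: ltnP => [|j_le_n]; first by rewrite mul0r addr0.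
by rewrite add0r /K (big_cat_nat (leq0n j) j_le_n) PoszM mulrC.
Qed.

Let head_image_small j i : 2 * `|(\sum_(n < j) phi (unitv n) *~ (K n)%:Z) i| < (K j)%:Z.
Proof.
elim: j => [|j IHj]; first by rewrite big_ord0 /K big_nil.
rewrite big_ord_recr /= addrfctE fct_intmulE K_rec /c -muln2 !PoszM.
set s := (\sum_(_ < _) _) i in IHj *; set a := phi (unitv j) i.
have := ler_normD s (a * (K j)%:Z); rewrite normrM (ger0_norm (le0z_nat (K j))).
have := ler_wpM2r (le0z_nat (K j)) (M_bound j i); rewrite -/a.
move: IHj; move: (K j) (M j) => k m; lia.
Qed.

Lemma specker_slender_of_bound : exists N, forall n, (N <= n)%N -> phi (unitv n) = 0.
Proof.
have [B x_bound] := fin_supp_bounded (phi_fin (fun n => (K n)%:Z)).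
have y_image0 j : (B.*2 <= j)%N -> phi (y j) = 0.
  move=> Bj; apply/funext => i; apply/eqP; apply: contraT => t_neq0.
  have := x_bound i; rewrite (test_seq_split j) additive_mapD // additive_map_sum //.
  rewrite additive_mapMz // addrfctE fct_intmulE.
  under eq_bigr => n _ do rewrite additive_mapMz //.
  have := head_image_small j i; have := K_gt j.
  set s := (\sum_(_ < _) _) i; set t := phi (y j) i.
  have t_ge1 : 1 <= `|t| by rewrite -gtz0_ge1 normr_gt0.
  have := lerB_normD (t * (K j)%:Z) s; rewrite addrC normrM (ger0_norm (le0z_nat (K j))).
  have := ler_wpM2r (le0z_nat (K j)) t_ge1; rewrite mul1r.
  move: Bj; rewrite -muln2; move: (K j) => k; lia.
exists B.*2 => n Bn; have := congr1 phi (y_rec n).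
by rewrite additive_mapD // additive_mapMz // !y_image0 ?mul0rz ?addr0 // leqW.
Qed.

End GrowthSequence.

Lemma specker_slender : exists N, forall n, (N <= n)%N -> phi (unitv n) = 0.
Proof.
have /choice[M M_bound] n := fin_supp_bounded (phi_fin (unitv n)).
exact: (specker_slender_of_bound M_bound).
Qed.

Section SlenderTail.
Variable N : nat.
Hypothesis phi_unitv0 : forall n, (N <= n)%N -> phi (unitv n) = 0.

Lemma specker_tail_exp (b : int) (w : nat -> int) :
  1 < b -> phi (fun n => if (n < N)%N then 0 else b ^+ n * w n) = 0.
Proof.
set v := fun n => _; move=> b_gt1; apply/funext => i.
apply: (eq0_of_dvdz_exp b_gt1 (N := N)) => m Nm.
pose u n := if (n < m)%N then 0 else b ^+ (n - m) * w n.
have v_split : v = \sum_(n < m) unitv n *~ v n + u *~ b ^+ m.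
  rewrite {1}(unitv_split v m); congr (_ + _); apply/funext => n.
  rewrite fct_intmulE /u /v; case: ltnP => [//|m_le_n]; first by rewrite mul0r.
  rewrite ifF; first by rewrite mulrAC -exprD subnK.
  by apply/negbTE; rewrite -leqNgt (leq_trans Nm).
rewrite v_split additive_mapD // additive_map_sum // big1 => [|n _].
  by rewrite add0r additive_mapMz // fct_intmulE dvdz_mull.
rewrite additive_mapMz //; case: (ltnP n N) => [n_lt|n_ge]; last by rewrite phi_unitv0 ?mul0rz.
by rewrite /v n_lt mulr0z.
Qed.

Lemma specker_tail0 (v : nat -> int) : (forall n, (n < N)%N -> v n = 0) -> phi v = 0.
Proof.
move=> v_head.
(* 2^n and 3^n are coprime, so v is the sum of two sequences of the kind
   killed by specker_tail_exp. *)
have /choice[uv uv_bezout] n : exists uv : int * int, uv.1 * 2 ^+ n + uv.2 * 3 ^+ n = 1.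
  by apply/coprimezP; rewrite coprimezXl ?coprimezXr.
have -> : v = (fun n => if (n < N)%N then 0 else 2 ^+ n * ((uv n).1 * v n))
            + (fun n => if (n < N)%N then 0 else 3 ^+ n * ((uv n).2 * v n)).
  apply/funext => n; rewrite addrfctE /=; case: ltnP => [/v_head->|_]; first by rewrite addr0.
  by rewrite !mulrA -mulrDl [_ * (uv n).1]mulrC [_ * (uv n).2]mulrC uv_bezout mul1r.
by rewrite additive_mapD // !specker_tail_exp ?addr0.
Qed.

Lemma specker_expansion (v : nat -> int) : phi v = \sum_(n < N) phi (unitv n) *~ v n.
Proof.
rewrite {1}(unitv_split v N) additive_mapD // [X in _ + X]specker_tail0 => [|n n_lt];
  last by rewrite n_lt.
by rewrite addr0 additive_map_sum //; apply: eq_bigr => n _; rewrite additive_mapMz.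
Qed.

End SlenderTail.

Lemma specker_finite_rank : finite_rank (img phi (fun=> True)).
Proof.
have [N phi_unitv0] := specker_slender.
exists N => s s_img s_ind.
apply: (Z_independent_span_size (a := fun n => phi (unitv n))) => // l l_lt.
by have [v _ <-] := s_img l l_lt; exists v; apply: specker_expansion.
Qed.

End Specker.

Lemma Zomega_self_binding : self_binding (nat -> int : zmodType).
Proof.
split; first by exists nat, id; split.
split; first by apply: (infinite_rank_unitv_multiples (q := fun=> 1)) => // n; rewrite mulr1z.
by move=> I phi phi_add phi_fin; apply: specker_finite_rank.
Qed.

Lemma countType_fun_inj_bits (A B : countType) : exists f : (A -> B) -> nat -> bool, injective f.
Proof.
exists (fun x p => if unpickle p is Some ab then x ab.1 == ab.2 else false) => x y xy.
apply/funext => a; have := congr1 (fun h => h (pickle (a, x a))) xy.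
by rewrite /= pickleK /= eqxx => /esym/eqP.
Qed.

Section CountableSet.
Variable g : nat -> nat -> int.

Let block_kernel n : exists c : nat -> int, (exists2 i, (i < n.+1)%N & c i != 0) /\
  forall j, (j < n)%N -> \sum_(i < n.+1) g j (n * n + i)%N * c i = 0.
Proof.
have [|c [c_nz c_sol]] :=
  @homogeneous_system_nontrivial _ [seq (fun i => g j (n * n + i)%N) | j <- iota 0 n] n.+1.
  by rewrite size_map size_iota.
by exists c; split => // j jn; rewrite (c_sol (fun i => g j (n * n + i)%N)) // map_f // mem_iota.
Qed.

Let c := projT1 (choice block_kernel).
Let psi (v : nat -> int) : nat -> int := fun n => \sum_(i < n.+1) c n i * v (n * n + i)%N.
Let block n : nat -> int :=
  fun k => if (n * n <= k < n * n + n.+1)%N then c n (k - n * n)%N else 0.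

Let psi_add : additive_map psi.
Proof.
move=> x y; apply/funext => n; rewrite /psi !addrfctE opprfctE -sumrB /=.
by apply: eq_bigr => i _; rewrite mulrBr.
Qed.

Let psi_g j : Zfin (psi (g j)).
Proof.
apply/ZfinP; exists j.+1 => n jn; rewrite /psi -[RHS]((projT2 (choice block_kernel) n).2 j jn).
by apply: eq_bigr => i _; rewrite mulrC.
Qed.

Let psi_block n : psi (block n) = unitv n *~ \sum_(i < n.+1) c n i ^+ 2.
Proof.
apply/funext => m; rewrite fct_intmulE /psi /block /unitv.
have [m_eq_n|m_neq_n] := eqVneq m n.
  by rewrite m_eq_n mul1r; apply: eq_bigr => i _; rewrite leq_addr ltn_add2l ltn_ord addKn.
rewrite mul0r; apply: big1 => i _; rewrite ifF ?mulr0 //.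
apply/negbTE/negP => /andP[lo hi]; move/eqP: m_neq_n; have := ltn_ord i; nia.
Qed.

Lemma seq_escape_endomorphism : exists psi : (nat -> int) -> nat -> int,
  [/\ additive_map psi, forall j, Zfin (psi (g j)) & infinite_rank (img psi Zfin)].
Proof.
exists psi; split => //.
apply: (infinite_rank_unitv_multiples (q := fun n => \sum_(i < n.+1) c n i ^+ 2)).
  move=> n; have [[i i_lt ci_neq0] _] := projT2 (choice block_kernel) n.
  rewrite psumr_neq0 => [|j _]; last exact: sqr_ge0.
  by apply/hasP; exists (Ordinal i_lt); rewrite ?mem_index_enum //= exprn_even_gt0 ?ci_neq0.
move=> n; exists (block n); last exact: psi_block.
by apply/ZfinP; exists (n * n + n.+1)%N => k k_ge; rewrite /block ltnNge k_ge andbF.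
Qed.

End CountableSet.

Lemma countable_enum (T : choiceType) (x0 : T) (A : T -> Prop) :
  (exists f : {v | A v} -> nat, injective f) ->
  exists g : nat -> T, forall v, A v -> exists j, g j = v.
Proof.
move=> [f f_inj]; exists (fun j => xget x0 (fun v => exists h : A v, f (exist A v h) = j)).
move=> v Av; exists (f (exist A v Av)).
case: xgetP => [u _ [Au fu]|no_u]; last by case: (no_u v); exists Av.
by have := f_inj _ _ fu => -[].
Qed.

Lemma weakly_binding_uncountable (G : (nat -> int) -> Prop) :
  weakly_Zfin_binding G -> ~ exists f : {v | G v} -> nat, injective f.
Proof.
move=> [_ [_ G_binds]] /(countable_enum 0)[g g_onto].
have [psi [psi_add psi_g psi_inf]] := seq_escape_endomorphism g.
by apply: psi_inf; apply: G_binds => // v /g_onto[j <-].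
Qed.

Lemma infinite_rank_vanish_on_coords (G : zmodType) (I : Type) (f : G -> I -> int)
    (K : G -> Prop) :
  additive_map f -> injective f -> subgroup K -> infinite_rank K ->
  forall l : seq I, exists p : G * I,
    [/\ K p.1, forall i, List.In i l -> f p.1 i = 0 & f p.1 p.2 != 0].
Proof.
move=> f_add f_inj K_sub K_inf l.
have [s [s_K s_ind l_lt]] : exists s : seq G,
    [/\ forall k, (k < size s)%N -> K (nth 0 s k), Z_independent s & (size l < size s)%N].
  apply: contrapT => no_s; apply: K_inf; exists (size l) => s s_K s_ind.
  by rewrite leqNgt; apply/negP => l_lt; apply: no_s; exists s.
have [|d [[k0 k0_lt dk0_neq0] d_sol]] :=
  @homogeneous_system_nontrivial _ [seq (fun k => f (nth 0 s k) i) | i <- l] (size s).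
  by rewrite size_map.
pose x := \sum_(k < size s) nth 0 s k *~ d k.
have x_neq0 : x != 0.
  apply: contra dk0_neq0 => /eqP x_eq0; apply/eqP.
  have := s_ind (mkseq d (size s)) (size_mkseq _ _) _ k0; rewrite nth_mkseq //; apply.
  by rewrite -[RHS]x_eq0; apply: eq_bigr => k _; rewrite nth_mkseq.
have [i0 fxi0_neq0] : exists i0, f x i0 != 0.
  apply: contrapT => fx_eq0; move/negP: x_neq0; apply; apply/eqP/f_inj.
  rewrite additive_map0 //; apply/funext => i; apply: contrapT => fxi_neq0.
  by apply: fx_eq0; exists i; apply/eqP.
exists (x, i0); split => //=.
  by apply: subgroup_sum => // k _; apply: subgroupMz => //; apply: s_K.
move=> i i_in; rewrite additive_map_sum // fct_sumE.
rewrite -[RHS](d_sol (fun k => f (nth 0 s k) i)); last by apply/List_InP/List.in_map.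
by apply: eq_bigr => k _; rewrite additive_mapMz // fct_intmulE.
Qed.

Lemma infinite_rank_diagonal_map (G : zmodType) (I : Type) (f : G -> I -> int)
    (K : G -> Prop) :
  additive_map f -> injective f -> subgroup K -> infinite_rank K ->
  exists (theta : G -> nat -> int) (k : nat -> G) (D : nat -> int),
    [/\ additive_map theta, forall n, K (k n), forall n, D n != 0
      & forall n, theta (k n) = unitv n *~ D n].
Proof.
move=> f_add f_inj K_sub K_inf.
have [step step_spec] := choice (infinite_rank_vanish_on_coords f_add f_inj K_sub K_inf).
pose coords := fix coords m := if m is m'.+1 then (step (coords m')).2 :: coords m' else [::].
pose k m := (step (coords m)).1; pose i m := (step (coords m)).2.
have coords_i j m : (j < m)%N -> List.In (i j) (coords m).
  elim: m => [//|m IHm]; rewrite ltnS leq_eqVlt => /orP[/eqP->|/IHm]; by [left | right].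
have [||r [D [D_nz rw]]] := @upper_triangular_dual_family _ (fun m j => f (k m) (i j)).
- by move=> m j jm; have [_ vanish _] := step_spec (coords m); apply/vanish/coords_i.
- by move=> m; have [_ _] := step_spec (coords m).
exists (fun g n => \sum_(j < n.+1) r n j * f g (i j)), k, D; split => // [g h|m|m].
- apply/funext => n; rewrite !addrfctE opprfctE /= -sumrB.
  by apply: eq_bigr => j _; rewrite f_add mulrBr.
- by have [] := step_spec (coords m).
- apply/funext => n; rewrite rw fct_intmulE /unitv eq_sym.
  by case: eqP => [->|_]; rewrite ?mul1r ?mul0r.
Qed.

Section DiagonalHull.
Variables (G : zmodType) (K : G -> Prop) (theta : G -> nat -> int) (k : nat -> G) (D : nat -> int).
Hypotheses (theta_add : additive_map theta) (K_sub : subgroup K) (K_k : forall n, K (k n))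
  (D_nz : forall n, D n != 0) (theta_k : forall n, theta (k n) = unitv n *~ D n).

Definition diagonal_hull (v : nat -> int) : Prop := exists g, Zfin (v - theta g).

Lemma diagonal_hull_subgroup : subgroup diagonal_hull.
Proof.
split; first by exists 0; rewrite additive_map0 // subr0; apply: subgroup0 Zfin_subgroup.
move=> v w [g vg] [h wh]; exists (g - h).
have -> : v - w - theta (g - h) = (v - theta g) - (w - theta h).
  by rewrite theta_add; ring.
exact: subgroupB Zfin_subgroup _ _ vg wh.
Qed.

Lemma Zfin_theta_multiple z : Zfin z -> exists2 E : int, E != 0 & img theta K (z *~ E).
Proof.
move: z; apply: Zfin_sub_subgroup => [|n].
  exact/subgroup_purify/subgroup_img.
by exists (D n) => //; exists (k n).
Qed.

Lemma diagonal_hull_weakly_binding : binds K -> weakly_Zfin_binding diagonal_hull.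
Proof.
move=> K_binds; split; first exact: diagonal_hull_subgroup.
split=> [v v_fin|psi psi_add psi_hull]; first by exists 0; rewrite additive_map0 // subr0.
have phi_fin g : fin_supp (psi (theta g)).
  by apply: psi_hull; exists g; rewrite subrr; apply: subgroup0 Zfin_subgroup.
apply: finite_rank_multiples (K_binds _ _ (additive_map_comp theta_add psi_add) phi_fin).
move=> _ [z /Zfin_theta_multiple[E E_nz [g Kg theta_g]] <-].
by exists E => //; exists g; rewrite //= theta_g additive_mapMz.
Qed.

Let zbound (z : nat -> int) := xget 0%N (fun N => forall n, (N <= n)%N -> z n = 0).
Let embed (z : nat -> int) := \sum_(n < zbound z) k n *~ z n.
Let rep (v : nat -> int) := xget 0 (fun g => Zfin (v - theta g)).

Let theta_embed z : Zfin z -> forall m, theta (embed z) m = D m * z m.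
Proof.
move=> /ZfinP/(xgetPex 0%N) z_tail m; rewrite additive_map_sum //.
under eq_bigr => n _ do rewrite additive_mapMz // theta_k -mulrzA.
by rewrite (sum_unitvE (fun n => D n * z n)); case: ltnP => // /z_tail->; rewrite mulr0.
Qed.

Let Zfin_theta_embed z : Zfin z -> Zfin (theta (embed z)).
Proof.
move=> z_fin; have /ZfinP[N z_tail] := z_fin.
by apply/ZfinP; exists N => n Nn; rewrite theta_embed // z_tail ?mulr0.
Qed.

(* rep v only depends on the class of v modulo Z^(omega), and embed is
   injective on Z^(omega) with values in theta^-1(Z^(omega)); so v can be read
   off rep v + embed (v - theta (rep v)). *)
Lemma diagonal_hull_card_le : exists f : {v | diagonal_hull v} -> G, injective f.
Proof.
exists (fun v => rep (sval v) + embed (sval v - theta (rep (sval v)))) => -[v v_hull] [w w_hull] /=.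
set g := rep v; set h := rep w.
set a := v - theta g; set b := w - theta h => E.
have a_fin : Zfin a := xgetPex 0 v_hull; have b_fin : Zfin b := xgetPex 0 w_hull.
have gh : g - h = embed b - embed a.
  by rewrite -[g](addrK (embed a)) E addrAC [h + _ - h]addrC addKr.
have vw_fin : Zfin (v - w).
  have -> : v - w = a - b + theta (g - h).
    by rewrite theta_add /a /b; ring.
  apply: (subgroupD Zfin_subgroup); first exact: subgroupB Zfin_subgroup _ _ a_fin b_fin.
  by rewrite gh theta_add; apply: subgroupB Zfin_subgroup _ _ _ _; apply: Zfin_theta_embed.
have g_eq_h : g = h.
  rewrite /g /h /rep; congr (xget 0 _); apply/funext => u; apply/propext.
  have -> : w - theta u = (v - theta u) - (v - w) by ring.
  split=> u_fin; first exact: subgroupB Zfin_subgroup _ _ u_fin vw_fin.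
  by rewrite -(subrK (v - w) (v - theta u)); apply: subgroupD Zfin_subgroup _ _ u_fin vw_fin.
have a_eq_b : a = b.
  apply/funext => m; apply: (mulfI (D_nz m)); rewrite -!theta_embed //.
  by move: E; rewrite g_eq_h => /addrI->.
have v_eq_w : v = w by rewrite -(subrK (theta g) v) -/a a_eq_b /b g_eq_h subrK.
by move: w_hull; rewrite -v_eq_w => w_hull; rewrite (Prop_irrelevance v_hull w_hull).
Qed.

End DiagonalHull.

Theorem corollary5 :
  (* aleph_1 <= kappa_wb : every weakly Z^(omega)-binding group is uncountable *)
  (forall G : (nat -> int) -> Prop, weakly_Zfin_binding G ->
     ~ exists f : {v | G v} -> nat, injective f) /\
  (* kappa_wb <= kappa_b *)
  (forall G : zmodType, binding G ->
     exists H : (nat -> int) -> Prop, weakly_Zfin_binding H /\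
       exists f : {v | H v} -> G, injective f) /\
  (* kappa_b <= kappa_sb *)
  (forall G : zmodType, self_binding G ->
     exists H : zmodType, binding H /\ exists f : H -> G, injective f) /\
  (* kappa_sb <= continuum = |nat -> bool| *)
  (exists G : zmodType, self_binding G /\
     exists f : G -> (nat -> bool), injective f).
Proof.
split; first exact: weakly_binding_uncountable.
split.
  move=> G [[I [f [f_add f_inj]]] [K [K_sub [K_inf K_binds]]]].
  have [theta [k [D [theta_add K_k D_nz theta_k]]]] :=
    infinite_rank_diagonal_map f_add f_inj K_sub K_inf.
  exists (diagonal_hull theta); split; last exact: diagonal_hull_card_le.
  exact: diagonal_hull_weakly_binding K_k D_nz theta_k K_binds.
split.
  move=> G [G_torsionless [G_inf G_binds]]; exists G; split; last by exists id.
  by split=> //; exists (fun=> True).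
exists (nat -> int : zmodType); split; first exact: Zomega_self_binding.
exact: countType_fun_inj_bits.
Qed.
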